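(* Let $X\subset\mathbb{R}^2$ be a finite set with centroid $M$ and $1$-centre $C$. Then $M$ is the quadratic min-power centre of $X$ if and only if $M=C$.
   Context: Writing $X=\{x_j:j\in J\}$, the quadratic min-power centre is the unique minimiser of $P(s)=\sum_{j\in J}\|s-x_j\|^2+\max_{j\in J}\|s-x_j\|^2$; $M=\frac{1}{|J|}\sum_j x_j$; $C$ is the centre of the minimum enclosing circle of $X$. *)

(* points of the plane R^2 are pairs (R * R) over an
   abstract R : realFieldType (the statement only uses field/order operations). *)
From mathcomp Require Import all_boot all_order all_algebra.
Set Implicit Arguments. Unset Strict Implicit. Unset Printing Implicit Defensive.
Import Order.TTheory GRing.Theory Num.Theory.
Local Open Scope ring_scope.

Definition sqdist (R : realFieldType) (s x : R * R) : R :=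
  (s.1 - x.1) ^+ 2 + (s.2 - x.2) ^+ 2.

(* max_j ||s - x_j||^2 ; all terms are >= 0, so 0 is a neutral element *)
Definition maxsqdist (R : realFieldType) (n : nat) (x : 'I_n -> R * R) (s : R * R) : R :=
  \big[Num.max/0]_(j < n) sqdist s (x j).

Definition qpower (R : realFieldType) (n : nat) (x : 'I_n -> R * R) (s : R * R) : R :=
  \sum_(j < n) sqdist s (x j) + maxsqdist x s.

Definition is_qmp_centre (R : realFieldType) (n : nat) (x : 'I_n -> R * R) (s : R * R) : Prop :=
  (forall t, qpower x s <= qpower x t) /\
  (forall t, (forall u, qpower x t <= qpower x u) -> t = s).

Definition centroid (R : realFieldType) (n : nat) (x : 'I_n -> R * R) : R * R :=
  ((\sum_(j < n) (x j).1) / n%:R, (\sum_(j < n) (x j).2) / n%:R).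

(* c is the centre of the minimum enclosing circle (1-centre):
   it minimises the (squared) radius max_j ||c - x_j||^2 of the enclosing circle *)
Definition is_one_centre (R : realFieldType) (n : nat) (x : 'I_n -> R * R) (c : R * R) : Prop :=
  forall t, maxsqdist x c <= maxsqdist x t.

(* Steiner's rule writes the power as
     P(s) = sum_j |M - x_j|^2 + n |s - M|^2 + max_j |s - x_j|^2,
   so when M = C both varying terms are minimal at M, and M is the unique
   minimiser.  Conversely, along the segment from M to C the max term obeys
   the same strong-convexity estimate as each |s - x_j|^2, and C minimises
   it; moving from M towards C by the fraction 1/(n+2) therefore lowers the
   max term by more than the Steiner term grows, unless M = C. *)
From mathcomp Require Import all_boot all_order all_algebra.
From mathcomp Require Import reals ring lra.
Set Implicit Arguments. Unset Strict Implicit. Unset Printing Implicit Defensive.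
Import Order.TTheory GRing.Theory Num.Theory.
Local Open Scope ring_scope.

Section SquaredDistance.
Variable R : realFieldType.
Implicit Types a b c : R * R.

Definition convex_comb (e : R) a b : R * R :=
  ((1 - e) * a.1 + e * b.1, (1 - e) * a.2 + e * b.2).

Lemma sqdist_ge0 a b : 0 <= sqdist a b.
Proof. by rewrite /sqdist addr_ge0 // sqr_ge0. Qed.

Lemma sqdistxx a : sqdist a a = 0.
Proof. by rewrite /sqdist !subrr expr0n addr0. Qed.

Lemma sqdist_le0 a b : sqdist a b <= 0 -> a = b.
Proof.
case: a b => [a1 a2] [b1 b2]; rewrite /sqdist /= => h.
have [h1 h2] : (a1 - b1) ^+ 2 = 0 /\ (a2 - b2) ^+ 2 = 0.
  by move: (sqr_ge0 (a1 - b1)) (sqr_ge0 (a2 - b2)) => ? ?; split; lra.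
move/eqP: h1; rewrite sqrf_eq0 subr_eq0 => /eqP->.
by move/eqP: h2; rewrite sqrf_eq0 subr_eq0 => /eqP->.
Qed.

Lemma sqdist_convex_comb e a b c :
  sqdist (convex_comb e a b) c =
  (1 - e) * sqdist a c + e * sqdist b c - e * (1 - e) * sqdist a b.
Proof. by rewrite /sqdist /=; ring. Qed.

Lemma sqdist_convex_comb_l e a b :
  sqdist (convex_comb e a b) a = e ^+ 2 * sqdist a b.
Proof. by rewrite /sqdist /=; ring. Qed.

End SquaredDistance.

Section Power.
Variables (R : realFieldType) (n : nat) (x : 'I_n -> R * R).
Hypothesis n_gt0 : (0 < n)%N.

Let M := centroid x.

Lemma sum_sqdist_Steiner s :
  \sum_(j < n) sqdist s (x j) = \sum_(j < n) sqdist M (x j) + n%:R * sqdist s M.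
Proof.
have n_neq0 : (n%:R : R) != 0 by rewrite pnatr_eq0 -lt0n.
have [sum1 sum2] : \sum_(j < n) (x j).1 = n%:R * M.1 /\ \sum_(j < n) (x j).2 = n%:R * M.2.
  by split; rewrite /= mulrC divfK.
move: M sum1 sum2 => m sum1 sum2.
have termE j : sqdist s (x j) = sqdist m (x j)
    + ((s.1 - m.1) * (s.1 + m.1) + (s.2 - m.2) * (s.2 + m.2))
    - 2 * (s.1 - m.1) * (x j).1 - 2 * (s.2 - m.2) * (x j).2.
  by rewrite /sqdist; ring.
rewrite (eq_bigr _ (fun j _ => termE j)).
rewrite !sumrB big_split /= -!mulr_sumr sum1 sum2 sumr_const card_ord.
by rewrite -mulr_natl /sqdist; ring.
Qed.

Lemma qpowerE s :
  qpower x s = \sum_(j < n) sqdist M (x j) + n%:R * sqdist s M + maxsqdist x s.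
Proof. by rewrite /qpower sum_sqdist_Steiner. Qed.

Lemma le_maxsqdist s j : sqdist s (x j) <= maxsqdist x s.
Proof. by rewrite /maxsqdist (bigD1 j) //= le_max lexx. Qed.

Lemma maxsqdist_le s B : (forall j, sqdist s (x j) <= B) -> maxsqdist x s <= B.
Proof.
move=> leB; have B_ge0 : 0 <= B := le_trans (sqdist_ge0 _ _) (leB (Ordinal n_gt0)).
by apply: (big_ind (fun y => y <= B)) => // a b ? ?; rewrite ge_max; apply/andP.
Qed.

Lemma maxsqdist_convex_comb e a b : 0 <= e <= 1 ->
  maxsqdist x (convex_comb e a b) <=
  (1 - e) * maxsqdist x a + e * maxsqdist x b - e * (1 - e) * sqdist a b.
Proof.
case/andP=> e_ge0 e_le1; apply: maxsqdist_le => j.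
rewrite sqdist_convex_comb lerD2r lerD // ler_wpM2l ?le_maxsqdist //; lra.
Qed.

Lemma one_centre_qmp_centre : is_one_centre x M -> is_qmp_centre x M.
Proof.
move=> oneM.
have Steiner_ge0 t : 0 <= n%:R * sqdist t M by rewrite mulr_ge0 ?ler0n ?sqdist_ge0.
have minM t : qpower x M <= qpower x t.
  rewrite !qpowerE sqdistxx mulr0 addr0.
  by move: (oneM t) (Steiner_ge0 t); lra.
split=> // t mint.
have := mint M; rewrite !qpowerE sqdistxx mulr0 addr0 => le_tM.
have : n%:R * sqdist t M <= 0 by move: (oneM t) (Steiner_ge0 t); lra.
by rewrite pmulr_rle0 ?ltr0n //; apply: sqdist_le0.
Qed.

Lemma qmp_centre_one_centre C : is_one_centre x C ->
  (forall t, qpower x M <= qpower x t) -> M = C.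
Proof.
move=> oneC minM; apply: sqdist_le0.
set d := sqdist M C; set N : R := n%:R.
have N_ge0 : 0 <= N by rewrite ler0n.
set e := (N + 2)^-1.
have e_gt0 : 0 < e by rewrite invr_gt0; lra.
have eN2 : e * (N + 2) = 1 by rewrite mulVf //; lra.
have e_le1 : e <= 1 by nra.
have := minM (convex_comb e M C).
rewrite !qpowerE sqdistxx mulr0 addr0 sqdist_convex_comb_l -/d => le_Ms.
have e01 : 0 <= e <= 1 by rewrite (ltW e_gt0) e_le1.
have := maxsqdist_convex_comb M C e01.
have := oneC M; rewrite -/d => le_CM le_s.
(* with e = 1/(N+2) the two perturbation terms sum to -e^2 d *)
have : 0 <= - (e ^+ 2 * d) by nra.
by rewrite oppr_ge0 pmulr_rle0 // exprn_gt0.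
Qed.

End Power.

Theorem corollary2 (R : realType) (n : nat) (x : 'I_n -> R * R)
  (hn : (0 < n)%N) (hinj : injective x) (C : R * R)
  (hC : is_one_centre x C) :
  is_qmp_centre x (centroid x) <-> centroid x = C.
Proof.
split=> [[minM _] | MC]; first exact: qmp_centre_one_centre hC minM.
by apply: one_centre_qmp_centre => //; rewrite /= MC.
Qed.
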